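(* The size $z_{End}$ of the LZ-End factorization satisfies, for each edit type $\ast\in\{\mathrm{sub},\mathrm{ins},\mathrm{del}\}$ (the alphabet being allowed to contain as many distinct characters as needed): $\liminf_{n\to\infty}\mathsf{MS}_{\ast}(z_{End},n)\ge 2$, $\mathsf{AS}_{\ast}(z_{End},n)\ge z_{End}-\Theta(\sqrt{z_{End}})$, and $\mathsf{AS}_{\ast}(z_{End},n)=\Omega(\sqrt n)$.
   Context: $\mathsf{ed}$ is the edit distance. $\mathsf{MS}_{\mathrm{sub}}(C,n)=\max_{T\in\Sigma^n}\{C(T')/C(T): T'\in\Sigma^n,\ \mathsf{ed}(T,T')=1\}$, with $\mathsf{MS}_{\mathrm{ins}},\mathsf{MS}_{\mathrm{del}}$ analogous for $T'$ of length $n+1$, resp. $n-1$, and $\mathsf{AS}_\ast$ analogous with $C(T')-C(T)$. Bounds in terms of $z_{End}$ refer to $z_{End}(T)$ of the original string and assert existence of strings $T$ (with $z_{End}(T)$ arbitrarily large) and edited $T'$ achieving them. The LZ-End factorization of $T$ (length $n$) is $T=f_1\cdots f_z$ where for each $1\le i<z$, $f_i[1..|f_i|-1]$ is the longest prefix of $f_i\cdots f_z$ that occurs as a suffix of some string in $\{\varepsilon, f_1, f_1f_2,\ldots,f_1\cdots f_{i-1}\}$ (so $f_i$ is one character longer), and $f_z$ is the remaining suffix; $z_{End}(T)=z$. *)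

From mathcomp Require Import all_boot.
Set Implicit Arguments. Unset Strict Implicit. Unset Printing Implicit Defensive.

(* Strings are sequences over the (countably infinite) alphabet nat, so
   that "as many distinct characters as needed" are available. *)
Notation str := (seq nat).

Fixpoint ed (s t : str) {struct s} : nat :=
  match s with
  | [::] => size t
  | x :: s' =>
      let fix edx (t : str) : nat :=
        match t with
        | [::] => size s
        | y :: t' => minn (minn (ed s' t).+1 (edx t').+1) (ed s' t' + (x != y))
        end
      in edx t
  end.

(* Given the phrases [done] = f_1 .. f_{i-1} already produced and the remaining
   suffix [rest] = f_i ... f_z, the length of the longest prefix of [rest]
   occurring as a suffix of some string in {eps, f_1, f_1 f_2, ..., f_1..f_{i-1}}. *)
Definition lzend_match (done : seq str) (rest : str) : nat :=
  \max_(L < (size rest).+1 |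
        has (fun j => suffix (take L rest) (flatten (take j done)))
            (iota 0 (size done).+1)) L.

(* Greedy computation: the next phrase is that prefix plus one character,
   or the whole remaining suffix if no further character is available
   (this is the last phrase f_z). *)
Fixpoint lzend_rec (fuel : nat) (done : seq str) (rest : str) : seq str :=
  match fuel with
  | 0 => [::]
  | fuel'.+1 =>
      if rest is [::] then [::] else
      let f := take (lzend_match done rest).+1 rest in
      f :: lzend_rec fuel' (rcons done f) (drop (lzend_match done rest).+1 rest)
  end.

Definition lzend (T : str) : seq str := lzend_rec (size T) [::] T.

Definition zEnd (T : str) : nat := size (lzend T).

Inductive edit_kind := Sub | Ins | Del.

Definition edlen (k : edit_kind) (n : nat) : nat :=
  match k with Sub => n | Ins => n.+1 | Del => n.-1 end.

(* T' is a candidate in the definition of MS_k / AS_k for T *)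
Definition is_edit (k : edit_kind) (T T' : str) : Prop :=
  size T' = edlen k (size T) /\ ed T T' = 1.

From Pilot Require Import Defs.
From mathcomp Require Import all_boot zify.
Set Implicit Arguments. Unset Strict Implicit. Unset Printing Implicit Defensive.

(* Fix t > 0.  The text T consists of the 2t + 1 distinct characters
   t, ..., 1, t+1, ..., 2t, 2t+1, then the t^2 grid phrases
   (i+1 ... 1)(t+1 ... t+1+j) m_ij  (0 <= i, j < t)  with fresh markers m_ij,
   which together make up a text X of length t^3 + 2t^2 + 2t + 1, and finally
   a copy of a suffix of X followed by a fresh marker, which pads |T| to any
   value in (|X|, 2|X| + 1].  Every phrase is a suffix of a prefix of earlier
   phrases followed by a character new to the text, so LZ-End parses T into
   exactly t^2 + 2t + 2 phrases.
   Substituting 0 for the character t+1, deleting it, or inserting 0 before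
   it destroys the only occurrence of the pair "1 t+1" before the grid.  As
   the body of index (i, j) occurs in that of (i', j') only if i <= i' and
   j <= j', no body occurs earlier in T'.  A block occurring nowhere before
   itself contains the last character of an LZ-End phrase, the other
   characters of a phrase being copied; cutting T' into the head characters,
   the t^2 bodies, the t^2 markers and the last phrase thus gives
   z_End(T') >= 2t^2 + 2t + 1.  Since n ~ t^3 and z_End(T) ~ t^2, all three
   bounds follow. *)

Lemma dropl_cat (T : Type) n (s1 s2 : seq T) :
  n <= size s1 -> drop n (s1 ++ s2) = drop n s1 ++ s2.
Proof.
by move=> n_le; rewrite -{1}(cat_take_drop n s1) -catA drop_size_cat // size_takel.
Qed.

Lemma prefix_cat_sep (T : eqType) (w x y : seq T) c : c \notin w ->
  prefix w (x ++ c :: y) -> prefix w x.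
Proof.
elim: x w => [|a x IH] [|b w] //=; rewrite inE negb_or.
  by case/andP=> c_neq_b _ /andP [/eqP c_eq_b]; rewrite c_eq_b eqxx in c_neq_b.
by case/andP=> _ c_notin_w /andP [-> /(IH _ c_notin_w)].
Qed.

Lemma infix_cat_sep (T : eqType) (w x y : seq T) c : c \notin w ->
  infix w (x ++ c :: y) -> infix w x || infix w y.
Proof.
move=> c_notin_w; elim: x => [|a x IH].
  rewrite cat0s infix_consl => /orP [|->]; last by rewrite orbT.
  case: w c_notin_w => [|b w]; rewrite ?infix0s // inE negb_or => /andP [c_neq_b _].
  by rewrite /= eq_sym (negPf c_neq_b).
rewrite cat_cons infix_consl -cat_cons => /orP [/(prefix_cat_sep c_notin_w)/prefixW->//|].
by case/IH/orP => [w_in_x|->]; rewrite ?orbT // infix_consl w_in_x orbT.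
Qed.

Lemma infix_cons_notin (T : eqType) (a : T) w p q : a \notin p -> a \notin q ->
  infix (a :: w) (p ++ a :: q) -> prefix w q.
Proof.
move=> a_notin_p a_notin_q; elim: p a_notin_p => [_|b p IH].
  rewrite cat0s infix_consl /= eqxx => /orP [//|/mem_infix/(_ a (mem_head _ _))].
  by rewrite (negPf a_notin_q).
rewrite inE negb_or => /andP [a_neq_b /IH{}IH].
by rewrite cat_cons infix_consl /= (negPf a_neq_b).
Qed.

Lemma edE x s y t : ed (x :: s) (y :: t) =
  minn (minn (ed s (y :: t)).+1 (ed (x :: s) t).+1) (ed s t + (x != y)).
Proof. by []. Qed.

Lemma ed_cons2 x s t : ed (x :: s) (x :: t) <= ed s t.
Proof. rewrite edE eqxx addn0; lia. Qed.

Lemma edss s : ed s s = 0.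
Proof. by elim: s => // x s IH; apply/eqP; rewrite -leqn0 -IH ed_cons2. Qed.

Lemma ed_cat2l p s t : ed (p ++ s) (p ++ t) <= ed s t.
Proof. by elim: p => //= x p IH; apply: leq_trans (ed_cons2 _ _ _) IH. Qed.

Lemma ed_eq0 s t : ed s t = 0 -> s = t.
Proof.
elim: s t => [|x s IH] [|y t] //; rewrite edE => ed0.
have : ed s t + (x != y) = 0 by lia.
by case: eqP => [->|] /=; [rewrite addn0 => /IH -> | rewrite addn1].
Qed.

Lemma ed_subst x y s : ed (x :: s) (y :: s) <= 1.
Proof. rewrite edE edss; lia. Qed.

Lemma ed_ins y s : ed s (y :: s) <= 1.
Proof. by case: s => // x s; rewrite edE edss; lia. Qed.

Lemma ed_del x s : ed (x :: s) s <= 1.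
Proof. by case: s => // y s; rewrite edE edss; lia. Qed.

Definition edit_head (kd : edit_kind) (x : nat) (s : str) : str :=
  match kd with Defs.Sub => 0 :: s | Defs.Ins => 0 :: x :: s | Defs.Del => s end.

Lemma edit_head_cat kd x s1 s2 : edit_head kd x (s1 ++ s2) = edit_head kd x s1 ++ s2.
Proof. by case: kd. Qed.

Lemma is_edit_head kd p x s : x != 0 -> is_edit kd (p ++ x :: s) (p ++ edit_head kd x s).
Proof.
move=> x_neq0; have size_edit : size (p ++ edit_head kd x s) = edlen kd (size (p ++ x :: s)).
  by case: kd; rewrite !size_cat //= addnS.
split=> //; apply/eqP; rewrite eqn_leq lt0n; apply/andP; split.
  apply: leq_trans (ed_cat2l _ _ _) _.
  by case: kd {size_edit}; [apply: ed_subst | apply: ed_ins | apply: ed_del].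
apply/eqP => /ed_eq0 eq_edit.
case: kd size_edit eq_edit => /= size_edit eq_edit.
- by move/eqP: eq_edit; rewrite eqseq_cat // eqseq_cons (negbTE x_neq0) andbF.
- by move: size_edit; rewrite -eq_edit; lia.
- by move: size_edit; rewrite -eq_edit !size_cat /=; lia.
Qed.

Definition end_copyable (parsed : seq str) (w : str) : bool :=
  has (fun j => suffix w (flatten (take j parsed))) (iota 0 (size parsed).+1).

Lemma end_copyable0 parsed : end_copyable parsed [::].
Proof. by apply/hasP; exists 0; rewrite ?suffix0s. Qed.

Lemma end_copyableP parsed w :
  reflect (exists2 j, j <= size parsed & suffix w (flatten (take j parsed)))
          (end_copyable parsed w).
Proof.
apply: (iffP hasP) => [[j] | [j j_le]]; first by rewrite mem_iota ltnS; exists j.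
by exists j; rewrite // mem_iota ltnS.
Qed.

Lemma end_copyable_infix parsed w : end_copyable parsed w -> infix w (flatten parsed).
Proof.
case/end_copyableP => j _ /suffixW /infix_trans; apply.
by rewrite -{2}(cat_take_drop j parsed) flatten_cat prefix_infix.
Qed.

Lemma lzend_match_copyable parsed rest :
  end_copyable parsed (take (lzend_match parsed rest) rest).
Proof.
pose P := [pred L : 'I_(size rest).+1 | end_copyable parsed (take L rest)].
have P_gt0 : 0 < #|P|.
  by apply/card_gt0P; exists ord0; rewrite inE /= take0 end_copyable0.
have [L P_L max_L] := eq_bigmax_cond (@nat_of_ord _) P_gt0.
by have -> : lzend_match parsed rest = L by exact: max_L.
Qed.

Lemma leq_lzend_match parsed rest L : L <= size rest ->
  end_copyable parsed (take L rest) -> L <= lzend_match parsed rest.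
Proof.
rewrite -ltnS => L_le; exact: (@leq_bigmax_cond _ _ val (Ordinal L_le)).
Qed.

Lemma lzend_match_leq parsed rest b :
  (forall L, L <= size rest -> end_copyable parsed (take L rest) -> L <= b) ->
  lzend_match parsed rest <= b.
Proof. by move=> bound; apply/bigmax_leqP => L; apply: bound; rewrite -ltnS. Qed.

Lemma lzend_match_fresh parsed u c r : c \notin flatten parsed ->
  end_copyable parsed u -> lzend_match parsed (u ++ c :: r) = size u.
Proof.
move=> c_fresh u_copyable; apply/eqP; rewrite eqn_leq; apply/andP; split.
  apply: lzend_match_leq => L _ /end_copyable_infix/mem_infix sub_parsed.
  rewrite leqNgt; apply/negP => u_lt_L; move/negP: c_fresh; apply; apply: sub_parsed.
  by rewrite take_cat ltnNge ltnW //= -(subnSK u_lt_L) /= mem_cat mem_head orbT.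
by apply: leq_lzend_match; rewrite ?take_size_cat // size_cat leq_addr.
Qed.

Fixpoint fresh_lzend_parse (parsed ps : seq str) : Prop :=
  if ps is p :: ps' then
    (exists u c, [/\ p = rcons u c, c \notin flatten parsed & end_copyable parsed u])
    /\ fresh_lzend_parse (rcons parsed p) ps'
  else True.

Lemma fresh_lzend_parse_cat parsed ps1 ps2 : fresh_lzend_parse parsed ps1 ->
  fresh_lzend_parse (parsed ++ ps1) ps2 -> fresh_lzend_parse parsed (ps1 ++ ps2).
Proof.
elim: ps1 parsed => [|p ps1 IH] parsed /=; first by rewrite cats0.
by move=> [p_ok ps1_ok] ps2_ok; split=> //; apply: IH; rewrite ?cat_rcons.
Qed.

Lemma fresh_parse_singletons parsed s : uniq s ->
  {in s, forall x, x \notin flatten parsed} ->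
  fresh_lzend_parse parsed [seq [:: x] | x <- s].
Proof.
elim: s parsed => //= x s IH parsed /andP [x_notin_s s_uniq] s_fresh; split.
  by exists [::], x; split; rewrite ?s_fresh ?mem_head ?end_copyable0.
apply: IH => // y y_in_s.
rewrite flatten_rcons mem_cat inE negb_or s_fresh ?inE ?y_in_s ?orbT //=.
by apply: contraNneq x_notin_s => <-.
Qed.

Lemma lzend_rec_fresh_parse fuel parsed ps : size (flatten ps) <= fuel ->
  fresh_lzend_parse parsed ps -> lzend_rec fuel parsed (flatten ps) = ps.
Proof.
elim: ps fuel parsed => [|p ps IH] fuel parsed; first by case: fuel.
move=> size_le [[u [c [p_eq c_fresh u_copyable]]] ps_ok]; subst p.
move: size_le; rewrite /= cat_rcons size_cat /= addnS.
case: fuel => // fuel; rewrite ltnS => size_le.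
case rest_eq: (u ++ c :: flatten ps) => [|y ys].
  by move/(congr1 size): rest_eq; rewrite size_cat addnS.
cbn [lzend_rec]; rewrite -rest_eq (lzend_match_fresh _ c_fresh u_copyable) -cat_rcons.
rewrite take_size_cat ?drop_size_cat ?size_rcons //; congr cons.
by apply: IH => //; apply: leq_trans size_le; rewrite leq_addl.
Qed.

Lemma zEnd_fresh_parse ps : fresh_lzend_parse [::] ps -> zEnd (flatten ps) = size ps.
Proof. by move=> ps_ok; rewrite /zEnd /lzend lzend_rec_fresh_parse. Qed.

Fixpoint novel_blocks (ctx : str) (bs : seq str) : nat :=
  if bs is b :: bs' then ~~ infix b ctx + novel_blocks (ctx ++ b) bs' else 0.

Lemma novel_blocks_cat ctx bs1 bs2 :
  novel_blocks ctx (bs1 ++ bs2) =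
  novel_blocks ctx bs1 + novel_blocks (ctx ++ flatten bs1) bs2.
Proof.
by elim: bs1 ctx => [|b bs1 IH] ctx /=; rewrite ?cats0 // IH catA addnA.
Qed.

Lemma novel_blocks_nil ctx bs : flatten bs = [::] -> novel_blocks ctx bs = 0.
Proof.
by elim: bs ctx => //= -[|//] bs IH ctx /IH ->; rewrite infix0s.
Qed.

Lemma novel_singletons ctx s : uniq s -> {in s, forall x, x \notin ctx} ->
  novel_blocks ctx [seq [:: x] | x <- s] = size s.
Proof.
elim: s ctx => //= x s IH ctx /andP [x_notin_s s_uniq] s_fresh.
rewrite infix1s s_fresh ?mem_head // IH // => y y_in_s.
rewrite mem_cat inE negb_or s_fresh ?inE ?y_in_s ?orbT //=.
by apply: contraNneq x_notin_s => <-.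
Qed.

Lemma novel_blocks_phrase ctx bs l : 0 < l <= size (flatten bs) ->
  infix (take l.-1 (flatten bs)) ctx ->
  exists2 bs', flatten bs' = drop l (flatten bs) &
    novel_blocks ctx bs <= (novel_blocks (ctx ++ take l (flatten bs)) bs').+1.
Proof.
elim: bs ctx l => [|b bs IH] ctx l /andP [l_gt0]; first by rewrite leqNgt l_gt0.
rewrite /= size_cat => l_le prefix_in_ctx.
have [l_le_b | b_lt_l] := leqP l (size b).
  exists (drop l b :: bs); first by rewrite /= dropl_cat.
  rewrite /= takel_cat // -catA cat_take_drop -addSn leq_add2r.
  by case: (~~ infix b ctx); case: (~~ infix _ _).
have b_le : size b <= l.-1 by lia.
have b_in_ctx : infix b ctx.
  by apply: (infix_trans _ prefix_in_ctx); rewrite take_cat ltnNge b_le prefix_infix.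
have rest_in_ctx : infix (take (l - size b).-1 (flatten bs)) (ctx ++ b).
  apply/infix_catr/(infix_trans _ prefix_in_ctx).
  rewrite take_cat ltnNge b_le /=.
  have -> : l.-1 - size b = (l - size b).-1 by lia.
  exact: suffix_infix.
have [|bs' flatten_bs' novel_le] := IH (ctx ++ b) (l - size b) _ rest_in_ctx.
  by rewrite subn_gt0 b_lt_l leq_subLR.
exists bs'; first by rewrite flatten_bs' drop_cat ltnNge (ltnW b_lt_l).
by rewrite b_in_ctx add0n take_cat ltnNge (ltnW b_lt_l) /= catA.
Qed.

Lemma novel_blocks_le_lzend_rec fuel parsed bs : size (flatten bs) <= fuel ->
  novel_blocks (flatten parsed) bs <= size (lzend_rec fuel parsed (flatten bs)).
Proof.
elim: fuel parsed bs => [|fuel IH] parsed bs.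
  by rewrite leqn0 => /nilP /novel_blocks_nil ->.
case rest_eq: (flatten bs) => [|x r] size_le; first by rewrite novel_blocks_nil.
cbn [lzend_rec]; rewrite -rest_eq.
(* The next phrase is [take m.+1 (flatten bs)], of length [l] (shorter only for the last one). *)
set m := lzend_match parsed (flatten bs); set l := minn m.+1 (size (flatten bs)).
have take_l : take l (flatten bs) = take m.+1 (flatten bs) by rewrite take_min take_size.
have drop_l : drop l (flatten bs) = drop m.+1 (flatten bs).
  by rewrite /l; case: leqP => // /ltnW ?; rewrite drop_size drop_oversize.
have l_gt0 : 0 < l <= size (flatten bs) by rewrite leq_min geq_minr rest_eq.
have head_copied : infix (take l.-1 (flatten bs)) (flatten parsed).
  apply: prefix_infix_trans (end_copyable_infix (lzend_match_copyable parsed _)).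
  have -> : take l.-1 (flatten bs) = take l.-1 (take m (flatten bs)).
    by rewrite -take_min (minn_idPl _) // /l; lia.
  exact: prefix_take.
have [bs' flatten_bs' novel_le] := novel_blocks_phrase l_gt0 head_copied.
apply: (leq_trans novel_le); rewrite /= ltnS take_l -flatten_rcons -drop_l -flatten_bs'.
apply: IH; rewrite flatten_bs' size_drop; move: size_le; rewrite rest_eq /=; lia.
Qed.

Lemma novel_blocks_le_zEnd bs : novel_blocks [::] bs <= zEnd (flatten bs).
Proof. exact: (@novel_blocks_le_lzend_rec _ [::]). Qed.

Section Construction.

Variable t : nat.
Hypothesis t_gt0 : 0 < t.

Definition head_text (u : str) : str := rev (iota 1 t) ++ u ++ [:: (2 * t).+1].
Definition upper_run : str := iota t.+1 t.
Definition grid_body (k : nat) : str := rev (iota 1 (k %/ t).+1) ++ iota t.+1 (k %% t).+1.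
Definition marker (k : nat) : nat := 2 * t + 2 + k.
Definition grid_phrase (k : nat) : str := rcons (grid_body k) (marker k).
Definition grid_phrases (a : nat) : seq str := map grid_phrase (iota 0 a).
Definition grid (a : nat) : str := flatten (grid_phrases a).
Definition base_text : str := head_text upper_run ++ grid (t * t).
Definition tail_phrase (r : nat) : str :=
  rcons (drop (size base_text - r) base_text) (marker (t * t)).
(* T is [witness_text upper_run r] and T' is [witness_text (edited_run kd) r]. *)
Definition witness_text (u : str) (r : nat) : str :=
  head_text u ++ grid (t * t) ++ tail_phrase r.
Definition edited_run (kd : edit_kind) : str := edit_head kd t.+1 (iota t.+2 t.-1).

Lemma grid_phrases_rcons a : grid_phrases a.+1 = rcons (grid_phrases a) (grid_phrase a).
Proof. by rewrite /grid_phrases -addn1 iotaD map_cat cats1. Qed.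

Lemma grid_rcons a : grid a.+1 = grid a ++ grid_phrase a.
Proof. by rewrite /grid grid_phrases_rcons flatten_rcons. Qed.

Lemma size_grid_phrase k : size (grid_phrase k) = k %/ t + k %% t + 3.
Proof. rewrite size_rcons size_cat size_rev !size_iota; lia. Qed.

Lemma size_grid_row m n : n <= t ->
  2 * size (flatten (map grid_phrase (iota (m * t) n))) = n * (2 * m + n + 5).
Proof.
elim: n => [|n IH] n_lt; first by rewrite muln0.
rewrite -[n.+1]addn1 iotaD map_cat flatten_cat size_cat /= cats0 size_grid_phrase.
rewrite divnMDl // modnMDl divn_small // modn_small // mulnDr IH 1?ltnW //; lia.
Qed.

Lemma size_grid m : 2 * size (grid (m * t)) = m * t * (m + t + 4).
Proof.
elim: m => [|m IH] //; rewrite [m.+1 * t]mulSnr /grid /grid_phrases iotaD.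
rewrite map_cat flatten_cat size_cat.
by rewrite mulnDr IH size_grid_row //; lia.
Qed.

Lemma size_base_text : size base_text = t * t * t + 2 * (t * t) + 2 * t + 1.
Proof.
have := size_grid t; rewrite size_cat !size_cat size_rev !size_iota /=; lia.
Qed.

Lemma mem_grid_body k x :
  (x \in grid_body k) = (0 < x <= (k %/ t).+1) || (t < x <= t + (k %% t).+1).
Proof. by rewrite mem_cat mem_rev !mem_iota; congr orb; lia. Qed.

Lemma grid_body_bound k x : k < t * t -> x \in grid_body k -> 0 < x <= 2 * t.
Proof.
rewrite -ltn_divLR // mem_grid_body => k_lt.
have := ltn_pmod k t_gt0; lia.
Qed.

Lemma grid_lt_marker a x : a <= t * t -> x \in grid a -> x < marker a.
Proof.
move=> a_le /flatten_mapP [k]; rewrite mem_iota /= mem_rcons inE => k_lt.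
case/predU1P => [->|/(grid_body_bound (leq_trans k_lt a_le))]; rewrite /marker; lia.
Qed.

Lemma uniq_head_text u : subseq u (0 :: upper_run) -> uniq (head_text u).
Proof.
move=> u_sub; apply: (subseq_uniq (s2 := head_text (0 :: upper_run))).
  by apply: cat_subseq (subseq_refl _) (cat_subseq u_sub (subseq_refl _)).
have -> : head_text (0 :: upper_run) = rev (iota 1 t) ++ 0 :: iota t.+1 t.+1.
  rewrite /head_text; have -> : (2 * t).+1 = t.+1 + t by lia.
  by rewrite /upper_run -[[:: t.+1 + t]]/(iota (t.+1 + t) 1) cat_cons -iotaD addn1.
rewrite cat_uniq rev_uniq cons_uniq !iota_uniq mem_iota !andbT andTb.
by apply/hasPn => x; rewrite inE mem_iota mem_rev mem_iota; lia.
Qed.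

Lemma mem_subseq_upper u x : subseq u (0 :: upper_run) -> x \in u ->
  (x == 0) || (t < x <= 2 * t).
Proof. by move=> u_sub /(mem_subseq u_sub); rewrite inE mem_iota; lia. Qed.

Lemma head_text_le u x : subseq u (0 :: upper_run) ->
  x \in head_text u -> x <= (2 * t).+1.
Proof.
move=> u_sub; rewrite !mem_cat mem_rev mem_iota inE.
by case/or3P => [|/(mem_subseq_upper u_sub)|/eqP->] //; lia.
Qed.

Lemma size_head_text u : size (head_text u) = t + size u + 1.
Proof. by rewrite !size_cat size_rev size_iota addnA. Qed.

Lemma grid_body_suffix k : k < t * t ->
  suffix (grid_body k) (take (t + (k %% t).+1) (head_text upper_run)).
Proof.
move=> k_lt; have div_lt : k %/ t < t by rewrite ltn_divLR.
have mod_lt := ltn_pmod k t_gt0.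
rewrite /head_text /upper_run catA takel_cat; last first.
  by rewrite size_cat size_rev !size_iota; lia.
rewrite take_cat size_rev size_iota ltnNge leq_addr /= addKn take_iota (minn_idPl mod_lt).
rewrite suffix_catl // eqxx suffix_rev andTb.
have -> : iota 1 (k %/ t).+1 = take (k %/ t).+1 (iota 1 t).
  by rewrite take_iota (minn_idPl div_lt).
exact: prefix_take.
Qed.

Lemma fresh_parse_grid m a : a + m = t * t ->
  fresh_lzend_parse ([seq [:: x] | x <- head_text upper_run] ++ grid_phrases a)
                    (map grid_phrase (iota a m)).
Proof.
elim: m a => [//|m IH] a a_m /=; have a_lt : a < t * t by lia.
split; last by rewrite rcons_cat -grid_phrases_rcons; apply: IH; lia.
exists (grid_body a), (marker a); split=> //.
  rewrite flatten_cat flatten_seq1 mem_cat negb_or; apply/andP; split; apply/negP.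
    by move/(head_text_le (subseq_cons _ _)); rewrite /marker; lia.
  by move/(grid_lt_marker (ltnW a_lt)); rewrite ltnn.
have j_le : t + (a %% t).+1 <= size (head_text upper_run).
  by rewrite size_head_text size_iota; have := ltn_pmod a t_gt0; lia.
apply/end_copyableP; exists (t + (a %% t).+1).
  by rewrite size_cat size_map; apply: leq_trans j_le (leq_addr _ _).
rewrite takel_cat ?size_map // -map_take flatten_seq1.
exact: grid_body_suffix.
Qed.

Lemma base_text_lt_marker x : x \in base_text -> x < marker (t * t).
Proof.
rewrite mem_cat => /orP [|/(grid_lt_marker (leqnn _))//].
by move/(head_text_le (subseq_cons _ _)); rewrite /marker; lia.
Qed.

Lemma zEnd_witness_upper r : zEnd (witness_text upper_run r) = t * t + 2 * t + 2.
Proof.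
set parsed := [seq [:: x] | x <- head_text upper_run] ++ grid_phrases (t * t).
have flatten_parsed : flatten parsed = base_text by rewrite flatten_cat flatten_seq1.
have -> : witness_text upper_run r = flatten (parsed ++ [:: tail_phrase r]).
  by rewrite flatten_cat flatten_parsed /= cats0 /base_text -catA.
rewrite zEnd_fresh_parse.
  by rewrite !size_cat size_map size_head_text size_map !size_iota /=; lia.
apply: fresh_lzend_parse_cat.
  apply: fresh_lzend_parse_cat.
    exact: fresh_parse_singletons (uniq_head_text (subseq_cons _ _)) _.
  by have := @fresh_parse_grid (t * t) 0 (add0n _); rewrite cats0.
split=> //; exists (drop (size base_text - r) base_text), (marker (t * t)); split=> //.
  by rewrite flatten_parsed; apply/negP => /base_text_lt_marker; rewrite ltnn.
by apply/end_copyableP; exists (size parsed); rewrite // take_size flatten_parsed suffix_drop.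
Qed.

Lemma grid_body_pair k : infix [:: 1; t.+1] (grid_body k).
Proof.
rewrite /grid_body -[iota 1 _]/(1 :: iota 2 (k %/ t)).
rewrite -[iota t.+1 _]/(t.+1 :: iota t.+2 (k %% t)).
by rewrite rev_cons cat_rcons (infix_infix _ [:: 1; t.+1]).
Qed.

Lemma pair_notin_lower u : 1 \notin u -> ~~ prefix [:: t.+1] u ->
  ~~ infix [:: 1; t.+1] (rev (iota 1 t) ++ u).
Proof.
move=> one_notin_u; apply: contra.
have -> : rev (iota 1 t) = rcons (rev (iota 2 t.-1)) 1.
  by case: t t_gt0 => // t' _; rewrite -rev_cons.
by rewrite cat_rcons; apply: infix_cons_notin one_notin_u; rewrite mem_rev mem_iota.
Qed.

Lemma grid_body_in_grid a s : a < t * t ->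
  infix (grid_body a) (flatten (map grid_phrase s)) ->
  exists2 k, k \in s & infix (grid_body a) (grid_body k).
Proof.
move=> a_lt; elim: s => [|k s IH] /=.
  by rewrite -size_eq0 size_cat size_rev !size_iota addnS.
have marker_notin : marker k \notin grid_body a.
  by apply/negP => /(grid_body_bound a_lt); rewrite /marker; lia.
rewrite cat_rcons => /(infix_cat_sep marker_notin)/orP [in_k | /IH [k' k'_in in_k']].
  by exists k; rewrite ?mem_head.
by exists k'; rewrite // inE k'_in orbT.
Qed.

(* The two runs of [grid_body a] end with a %/ t + 1 and t + 1 + a %% t. *)
Lemma grid_body_infix_leq a k : a < t * t -> k < t * t ->
  infix (grid_body a) (grid_body k) -> a <= k.
Proof.
move=> a_lt k_lt /mem_infix sub_k; rewrite (divn_eq a t) (divn_eq k t).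
have := sub_k (a %/ t).+1; have := sub_k (t + (a %% t).+1); rewrite !mem_grid_body.
have : k %/ t < t by rewrite ltn_divLR.
have := ltn_pmod a t_gt0; have : a %/ t < t by rewrite ltn_divLR.
move: (a %/ t) (a %% t) (k %/ t) (k %% t) => i j i' j' *.
have [i_le j_le] : i <= i' /\ j <= j' by lia.
by rewrite leq_add ?leq_mul.
Qed.

Definition grid_blocks (a m : nat) : seq str :=
  flatten [seq [:: grid_body k; [:: marker k]] | k <- iota a m].

Lemma flatten_grid_blocks m : flatten (grid_blocks 0 m) = grid m.
Proof.
rewrite /grid /grid_phrases /grid_blocks; elim: (iota 0 m) => //= k s ->.
by rewrite cat_rcons.
Qed.

Section EditedHead.

Variable u : str.
Hypothesis u_sub : subseq u (0 :: upper_run).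
Hypothesis no_prefix : ~~ prefix [:: t.+1] u.

Lemma grid_body_novel a : a < t * t -> ~~ infix (grid_body a) (head_text u ++ grid a).
Proof.
move=> a_lt; apply/negP.
have one_notin_u : 1 \notin u by apply/negP => /(mem_subseq_upper u_sub); lia.
have sep_notin : (2 * t).+1 \notin grid_body a by apply/negP => /(grid_body_bound a_lt); lia.
rewrite /head_text -!catA catA => /(infix_cat_sep sep_notin)/orP [].
  by move/(infix_trans (grid_body_pair a)); apply/negP; apply: pair_notin_lower.
case/grid_body_in_grid => // k; rewrite mem_iota => k_lt.
move/(grid_body_infix_leq a_lt (ltn_trans k_lt a_lt)); lia.
Qed.

Lemma novel_grid_blocks m a : a + m = t * t ->
  novel_blocks (head_text u ++ grid a) (grid_blocks a m) = 2 * m.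
Proof.
elim: m a => [|m IH] a a_m; first by [].
have a_lt : a < t * t by lia.
have marker_notin : marker a \notin (head_text u ++ grid a) ++ grid_body a.
  apply/negP; rewrite -catA mem_cat => /orP [/(head_text_le u_sub)|].
    by rewrite /marker; lia.
  rewrite mem_cat => /orP [/(grid_lt_marker (ltnW a_lt))|/(grid_body_bound a_lt)].
    by rewrite ltnn.
  by rewrite /marker; lia.
rewrite /grid_blocks /= -/(grid_blocks a.+1 m) grid_body_novel // infix1s marker_notin.
rewrite -(catA _ (grid_body a)) cats1 -/(grid_phrase a) -(catA (head_text u)) -grid_rcons.
by rewrite IH; lia.
Qed.

Lemma zEnd_witness_ge r :
  size (head_text u) + 2 * (t * t) + 1 <= zEnd (witness_text u r).
Proof.
pose bs := [seq [:: x] | x <- head_text u] ++ grid_blocks 0 (t * t) ++ [:: tail_phrase r].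
have -> : witness_text u r = flatten bs.
  by rewrite !flatten_cat flatten_seq1 flatten_grid_blocks /= cats0.
apply: leq_trans (novel_blocks_le_zEnd bs).
rewrite !novel_blocks_cat novel_singletons ?uniq_head_text // flatten_seq1 cat0s.
have := novel_grid_blocks (add0n (t * t)).
rewrite cats0 => ->; rewrite flatten_grid_blocks /= addn0 -addnA !leq_add2l lt0b.
have marker_in_tail : marker (t * t) \in tail_phrase r by rewrite mem_rcons mem_head.
apply/negP => /mem_infix/(_ _ marker_in_tail); rewrite mem_cat.
case/orP => [/(head_text_le u_sub)|/(grid_lt_marker (leqnn _))]; last by rewrite ltnn.
by rewrite /marker; lia.
Qed.

End EditedHead.

Lemma upper_runE : upper_run = t.+1 :: iota t.+2 t.-1.
Proof. by rewrite /upper_run; case: t t_gt0. Qed.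

Lemma edited_run_subseq kd : subseq (edited_run kd) (0 :: upper_run).
Proof.
rewrite upper_runE; case: kd.
- exact: (@cat_subseq _ [:: 0] _ [:: 0]) (subseq_refl _) (subseq_cons _ _).
- exact: subseq_refl.
- exact: subseq_trans (subseq_cons _ _) (subseq_cons _ _).
Qed.

Lemma edited_run_prefix kd : ~~ prefix [:: t.+1] (edited_run kd).
Proof. by case: kd => //=; case: (t.-1) => //= n; rewrite ltn_eqF. Qed.

Lemma size_edited_run kd : t.-1 <= size (edited_run kd).
Proof. by case: kd; rewrite /= size_iota ?leqW. Qed.

Lemma is_edit_witness kd r :
  is_edit kd (witness_text upper_run r) (witness_text (edited_run kd) r).
Proof.
rewrite /witness_text /head_text upper_runE /edited_run -!catA -edit_head_cat cat_cons.
exact: is_edit_head.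
Qed.

Lemma size_witness_text r : r <= size base_text ->
  size (witness_text upper_run r) = size base_text + r + 1.
Proof.
move=> r_le; rewrite /witness_text catA -/base_text size_cat size_rcons size_drop.
lia.
Qed.

End Construction.

Lemma doubling_cover (f : nat -> nat) t0 :
  (forall t, t0 <= t -> f t < f t.+1 <= (f t).*2.+1) ->
  forall n, f t0 < n -> exists2 t, t0 <= t & f t < n <= (f t).*2.+1.
Proof.
move=> f_step; elim=> // n IH; rewrite ltnS leq_eqVlt => /predU1P [<-|].
  by exists t0 => //; lia.
case/IH => t t_ge /andP [lt_n n_le]; have [n_lt|n_ge] := ltnP n (f t).*2.+1.
  by exists t => //; lia.
by exists t.+1; have := f_step t t_ge; lia.
Qed.

Definition zEnd_doubling (kd : edit_kind) (t : nat) (T T' : str) : Prop :=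
  [/\ is_edit kd T T', zEnd T = t * t + 2 * t + 2 & 2 * (t * t) + 2 * t + 1 <= zEnd T'].

Lemma zEnd_doubling_witness kd t r : 0 < t ->
  zEnd_doubling kd t (witness_text t (upper_run t) r) (witness_text t (edited_run t kd) r).
Proof.
move=> t_gt0; split; [exact: is_edit_witness | exact: zEnd_witness_upper |].
have := zEnd_witness_ge t_gt0 (edited_run_subseq t_gt0 kd) (edited_run_prefix t kd) r.
apply: leq_trans.
by rewrite size_head_text; have := size_edited_run t kd; lia.
Qed.

Lemma size_base_text_growth t : 3 <= t ->
  size (base_text t) < size (base_text t.+1) <= (size (base_text t)).*2.+1.
Proof. by move=> t_ge; rewrite !size_base_text ?(ltn_trans _ t_ge) //; nia. Qed.

Lemma zEnd_doubling_of_size kd t0 n : 3 <= t0 -> size (base_text t0) < n ->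
  exists t T T', [/\ t0 <= t, size T = n, n <= (size (base_text t)).*2.+1
                    & zEnd_doubling kd t T T'].
Proof.
move=> t0_ge n_gt.
have growth t : t0 <= t -> _ := fun t_ge => size_base_text_growth (leq_trans t0_ge t_ge).
have [t t_ge /andP [base_lt n_le]] := doubling_cover growth n_gt.
have t_gt0 : 0 < t by lia.
set r := n - size (base_text t) - 1.
exists t, (witness_text t (upper_run t) r), (witness_text t (edited_run t kd) r).
split=> //; last exact: zEnd_doubling_witness.
by rewrite size_witness_text // /r; lia.
Qed.

Theorem mainTheorem16 :
  forall k : edit_kind,
    (* liminf_{n -> oo} MS_k(zEnd, n) >= 2 :
       for every j >= 1, eventually MS_k(zEnd, n) >= 2 - 1/j *)
    (forall j : nat, 0 < j ->
       exists N : nat, forall n : nat, N <= n ->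
         exists T T' : str,
           size T = n /\ is_edit k T T' /\
           (2 * j - 1) * zEnd T <= j * zEnd T')
    /\
    (* AS_k(zEnd, n) >= zEnd - Theta(sqrt zEnd), for strings T with zEnd(T)
       arbitrarily large:  2 zEnd(T) - zEnd(T') <= c' sqrt(zEnd(T)),
       written with c = c'^2 and squared *)
    (exists c : nat, forall m : nat,
       exists T T' : str,
         m <= zEnd T /\ is_edit k T T' /\
         (2 * zEnd T - zEnd T') ^ 2 <= c * zEnd T)
    /\
    (* AS_k(zEnd, n) = Omega(sqrt n) :
       exists c > 0, N, for all n >= N, AS_k(zEnd,n) >= sqrt(n) / c *)
    (exists c N : nat, 0 < c /\ forall n : nat, N <= n ->
       exists T T' : str,
         size T = n /\ is_edit k T T' /\
         n <= (c * (zEnd T' - zEnd T)) ^ 2).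
Proof.
move=> kd; split; [|split].
- move=> j j_gt0; exists (size (base_text (2 * j + 3))).+1 => n n_gt.
  have [t [T [T' [t_ge size_T _ [edit_TT' zEnd_T zEnd_T']]]]] :=
    zEnd_doubling_of_size kd (leq_addl (2 * j) 3) n_gt.
  exists T, T'; split=> //; split=> //; rewrite zEnd_T.
  by apply: leq_trans (leq_mul (leqnn j) zEnd_T'); nia.
- exists 9 => m.
  have [T [T' [edit_TT' zEnd_T zEnd_T']]] : exists T T', zEnd_doubling kd m.+1 T T'.
    by do 2 eexists; apply: zEnd_doubling_witness.
  by exists T, T'; rewrite zEnd_T; split; first nia; split=> //; nia.
- exists 1, (size (base_text 4)).+1; split=> // n n_gt.
  have [t [T [T' [t_ge size_T n_le [edit_TT' zEnd_T zEnd_T']]]]] :=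
    zEnd_doubling_of_size kd (isT : 3 <= 4) n_gt.
  exists T, T'; split=> //; split=> //; rewrite mul1n zEnd_T.
  by move: n_le; rewrite size_base_text; nia.
Qed.
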